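(* Let $A\overset{i}{\to}U\overset{j}{\to}G$ be an extension of a semilattice of groups $A$ by a group $G$. Then there exist an inverse semigroup $S$ and epimorphisms $\pi:U\to S$, $\kappa:S\to G$ such that (i) $A\overset{i}{\to}U\overset{\pi}{\to}S$ is an extension of $A$ by $S$, and (ii) $j=\kappa\circ\pi$. Moreover, whenever $S,\pi,\kappa$ satisfy (i) and (ii), then (iii) $S$ is $E$-unitary and (iv) $\ker\kappa=\sigma$ (the minimum group congruence on $S$).
   Context: A semilattice of groups is an inverse semigroup whose idempotents are central. An extension of $A$ by a group $G$ is an inverse semigroup $U$ with a monomorphism $i:A\to U$ and an epimorphism $j:U\to G$ with $i(A)=j^{-1}(1)$. An extension of $A$ by an inverse semigroup $S$ is an inverse semigroup $U$ with a monomorphism $i:A\to U$ and an idempotent-separating epimorphism $\pi:U\to S$ with $i(A)=\pi^{-1}(E(S))$. For an inverse semigroup $S$, $\sigma$ is given by $(s,t)\in\sigma$ iff $es=et$ for some $e\in E(S)$; $S$ is $E$-unitary if $e\le s$ with $e\in E(S)$ implies $s\in E(S)$; $\ker\kappa=\{(s,t):\kappa(s)=\kappa(t)\}$. *)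

(* An inverse semigroup, presented with its (unique) inversion: a regular
   semigroup (x x^-1 x = x, x^-1 x x^-1 = x^-1) whose idempotents commute. *)
Record InvSemigroup : Type := {
  isg_car :> Type;
  isg_mul : isg_car -> isg_car -> isg_car;
  isg_inv : isg_car -> isg_car;
  isg_assoc : forall x y z, isg_mul x (isg_mul y z) = isg_mul (isg_mul x y) z;
  isg_reg1 : forall x, isg_mul (isg_mul x (isg_inv x)) x = x;
  isg_reg2 : forall x, isg_mul (isg_mul (isg_inv x) x) (isg_inv x) = isg_inv x;
  isg_idem_comm : forall e f, isg_mul e e = e -> isg_mul f f = f ->
                   isg_mul e f = isg_mul f e
}.

Record Group : Type := {
  grp_car :> Type;
  grp_mul : grp_car -> grp_car -> grp_car;
  grp_one : grp_car;
  grp_inv : grp_car -> grp_car;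
  grp_assoc : forall x y z, grp_mul x (grp_mul y z) = grp_mul (grp_mul x y) z;
  grp_mul1 : forall x, grp_mul grp_one x = x;
  grp_mulr1 : forall x, grp_mul x grp_one = x;
  grp_mulV : forall x, grp_mul (grp_inv x) x = grp_one;
  grp_mulrV : forall x, grp_mul x (grp_inv x) = grp_one
}.

Definition idem (S : InvSemigroup) (e : S) : Prop := isg_mul S e e = e.

Definition semilattice_of_groups (S : InvSemigroup) : Prop :=
  forall e x : S, idem S e -> isg_mul S e x = isg_mul S x e.

Definition isg_hom (S T : InvSemigroup) (f : S -> T) : Prop :=
  forall x y, f (isg_mul S x y) = isg_mul T (f x) (f y).
Definition isg_grp_hom (S : InvSemigroup) (G : Group) (f : S -> G) : Prop :=
  forall x y, f (isg_mul S x y) = grp_mul G (f x) (f y).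

Definition injective {X Y : Type} (f : X -> Y) : Prop :=
  forall x y, f x = f y -> x = y.
Definition surjective {X Y : Type} (f : X -> Y) : Prop :=
  forall y, exists x, f x = y.

Definition group_extension (A U : InvSemigroup) (G : Group)
  (i : A -> U) (j : U -> G) : Prop :=
  isg_hom A U i /\ injective i /\
  isg_grp_hom U G j /\ surjective j /\
  (forall u : U, (exists a, i a = u) <-> j u = grp_one G).

Definition idem_separating (U S : InvSemigroup) (p : U -> S) : Prop :=
  forall e f : U, idem U e -> idem U f -> p e = p f -> e = f.

Definition isg_extension (A U S : InvSemigroup) (i : A -> U) (p : U -> S) : Prop :=
  isg_hom A U i /\ injective i /\
  isg_hom U S p /\ surjective p /\ idem_separating U S p /\
  (forall u : U, (exists a, i a = u) <-> idem S (p u)).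

Definition nat_le (S : InvSemigroup) (s t : S) : Prop :=
  exists e, idem S e /\ s = isg_mul S e t.

Definition E_unitary (S : InvSemigroup) : Prop :=
  forall e s : S, idem S e -> nat_le S e s -> idem S s.

Definition sigma (S : InvSemigroup) (s t : S) : Prop :=
  exists e, idem S e /\ isg_mul S e s = isg_mul S e t.

From Stdlib Require Import ProofIrrelevance ClassicalEpsilon.

(* Put N := ker j = i(A).  Since A is a semilattice of groups, every n in N
   commutes with the idempotents of U and satisfies n n^-1 = n^-1 n.  Hence
   u ρ v :<-> j u = j v /\ u u^-1 = v v^-1 is a congruence on U, and
   S := U/ρ is an inverse semigroup through which j factors; ρ separates
   idempotents, and its idempotent classes are exactly N.
   Conversely, for any such factorisation j = κ ∘ π, κ s = 1 forces s to be
   idempotent.  Such an idempotent-pure κ makes S E-unitary, and if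
   κ s = κ t then s^-1 t is idempotent, so e := s s^-1 t t^-1 satisfies
   e s = e t, i.e. s σ t. *)

Local Notation "x ** y" := (isg_mul _ x y) (at level 40, left associativity).
Local Notation "x ^-1" := (isg_inv _ x) (at level 2, left associativity, format "x ^-1").

Ltac reassoc t := transitivity t; [rewrite ?isg_assoc; reflexivity |].

Section InverseSemigroup.
Context {S : InvSemigroup}.
Implicit Types x y s t e f : S.

Lemma idem_mul_inv x : idem S (x ** x^-1).
Proof. unfold idem. reassoc (x ** x^-1 ** x ** x^-1). now rewrite isg_reg1. Qed.

Lemma idem_inv_mul x : idem S (x^-1 ** x).
Proof. unfold idem. reassoc (x^-1 ** x ** x^-1 ** x). now rewrite isg_reg2. Qed.

Lemma idem_mul e f : idem S e -> idem S f -> idem S (e ** f).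
Proof.
  intros He Hf. unfold idem.
  reassoc (e ** (f ** e) ** f). rewrite (isg_idem_comm _ f e Hf He).
  reassoc (e ** e ** (f ** f)). now rewrite He, Hf.
Qed.

Lemma inv_unique x y : x ** y ** x = x -> y ** x ** y = y -> y = x^-1.
Proof.
  intros Hxyx Hyxy.
  assert (Hyx : idem S (y ** x)).
  { unfold idem. reassoc (y ** x ** y ** x). now rewrite Hyxy. }
  assert (Hxy : idem S (x ** y)).
  { unfold idem. reassoc (x ** y ** x ** y). now rewrite Hxyx. }
  transitivity (y ** x ** (x^-1 ** x) ** y).
  { symmetry. reassoc (y ** (x ** x^-1 ** x) ** y). now rewrite isg_reg1. }
  rewrite (isg_idem_comm _ _ _ Hyx (idem_inv_mul x)).
  reassoc (x^-1 ** (x ** y ** x) ** y). rewrite Hxyx.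
  transitivity (x^-1 ** (x ** x^-1 ** x) ** y); [now rewrite isg_reg1 |].
  reassoc (x^-1 ** (x ** x^-1 ** (x ** y))).
  rewrite (isg_idem_comm _ _ _ (idem_mul_inv x) Hxy).
  reassoc (x^-1 ** (x ** y ** x) ** x^-1). rewrite Hxyx.
  apply isg_reg2.
Qed.

Lemma invK x : x^-1^-1 = x.
Proof. symmetry. apply inv_unique; [apply isg_reg2 | apply isg_reg1]. Qed.

Lemma inv_idem e : idem S e -> e^-1 = e.
Proof. intro He. symmetry. apply inv_unique; now rewrite !He. Qed.

Lemma inv_mul x y : (x ** y)^-1 = y^-1 ** x^-1.
Proof.
  symmetry. apply inv_unique.
  - reassoc (x ** (y ** y^-1 ** (x^-1 ** x)) ** y).
    rewrite (isg_idem_comm _ _ _ (idem_mul_inv y) (idem_inv_mul x)).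
    reassoc ((x ** x^-1 ** x) ** (y ** y^-1 ** y)). now rewrite !isg_reg1.
  - reassoc (y^-1 ** (x^-1 ** x ** (y ** y^-1)) ** x^-1).
    rewrite (isg_idem_comm _ _ _ (idem_inv_mul x) (idem_mul_inv y)).
    reassoc ((y^-1 ** y ** y^-1) ** (x^-1 ** x ** x^-1)). now rewrite !isg_reg2.
Qed.

Lemma mul_inv_mulK x y : x ** x^-1 = y ** y^-1 -> y ** (y^-1 ** x) = x.
Proof. intro H. rewrite isg_assoc, <- H. apply isg_reg1. Qed.

Lemma mul_inv_eq_quotient x y : x ** x^-1 = y ** y^-1 ->
  (y^-1 ** x) ** (y^-1 ** x)^-1 = y^-1 ** y /\ (y^-1 ** x)^-1 ** (y^-1 ** x) = x^-1 ** x.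
Proof.
  intro H. rewrite inv_mul, invK. split.
  - reassoc (y^-1 ** (x ** x^-1) ** y). rewrite H.
    reassoc (y^-1 ** y ** y^-1 ** y). now rewrite isg_reg2.
  - reassoc (x^-1 ** (y ** y^-1) ** x). rewrite <- H.
    reassoc (x^-1 ** x ** x^-1 ** x). now rewrite isg_reg2.
Qed.

Lemma sigma_of_idem_inv_mul s t : idem S (s^-1 ** t) -> sigma S s t.
Proof.
  intro Hg. set (g := s^-1 ** t) in *.
  assert (Hg' : t^-1 ** s = g).
  { rewrite <- (inv_idem _ Hg). unfold g. now rewrite inv_mul, invK. }
  set (e := s ** s^-1 ** (t ** t^-1)).
  assert (He : idem S e) by (apply idem_mul; apply idem_mul_inv).
  assert (Hes : e ** s = t ** g).
  { unfold e. rewrite (isg_idem_comm _ _ _ (idem_mul_inv s) (idem_mul_inv t)).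
    reassoc (t ** t^-1 ** (s ** s^-1 ** s)). rewrite isg_reg1, <- Hg'. now rewrite isg_assoc. }
  assert (Het : e ** t = s ** g).
  { unfold e. reassoc (s ** s^-1 ** (t ** t^-1 ** t)). rewrite isg_reg1.
    unfold g. now rewrite isg_assoc. }
  exists e. split; [exact He |].
  (* e s = e (e s) = (e t) g = s g g = s g = e t *)
  rewrite <- He at 1. rewrite <- isg_assoc, Hes, isg_assoc, Het.
  rewrite <- isg_assoc. now rewrite Hg.
Qed.

End InverseSemigroup.

Lemma hom_inv (S T : InvSemigroup) (f : S -> T) : isg_hom S T f ->
  forall x, f x^-1 = (f x)^-1.
Proof.
  intros Hf x. apply inv_unique; rewrite <- !Hf; [rewrite isg_reg1 | rewrite isg_reg2]; reflexivity.
Qed.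

Lemma semilattice_of_groups_mul_inv_comm (A : InvSemigroup) : semilattice_of_groups A ->
  forall c : A, c ** c^-1 = c^-1 ** c.
Proof.
  intros HA c.
  assert (E1 : c ** c^-1 = c^-1 ** c ** (c ** c^-1)).
  { transitivity (c ** (c^-1 ** c) ** c^-1); [now rewrite isg_assoc, isg_reg1 |].
    rewrite <- (HA _ c (idem_inv_mul c)). now rewrite !isg_assoc. }
  assert (E2 : c^-1 ** c = c ** c^-1 ** (c^-1 ** c)).
  { transitivity (c^-1 ** (c ** c^-1) ** c); [now rewrite isg_assoc, isg_reg2 |].
    rewrite <- (HA _ c^-1 (idem_mul_inv c)). now rewrite !isg_assoc. }
  rewrite E1, (isg_idem_comm _ _ _ (idem_inv_mul c) (idem_mul_inv c)), <- E2. reflexivity.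
Qed.

Lemma grp_idem_one (G : Group) (x : G) : grp_mul G x x = x -> x = grp_one G.
Proof.
  intro H. rewrite <- (grp_mulrV G x).
  rewrite <- H at 2. now rewrite <- grp_assoc, grp_mulrV, grp_mulr1.
Qed.

Lemma grp_inv_unique (G : Group) (x y : G) : grp_mul G x y = grp_one G -> y = grp_inv G x.
Proof.
  intro H. rewrite <- (grp_mul1 G y), <- (grp_mulV G x), <- grp_assoc, H. apply grp_mulr1.
Qed.

Section GroupValuedHom.
Context {S : InvSemigroup} {G : Group} {k : S -> G}.
Hypothesis k_hom : isg_grp_hom S G k.

Lemma grp_hom_idem e : idem S e -> k e = grp_one G.
Proof. intro He. apply grp_idem_one. now rewrite <- k_hom, He. Qed.

Lemma grp_hom_inv x : k x^-1 = grp_inv G (k x).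
Proof. apply grp_inv_unique. rewrite <- k_hom. apply grp_hom_idem, idem_mul_inv. Qed.

Lemma grp_hom_inv_mul_one s t : k s = k t -> k (s^-1 ** t) = grp_one G.
Proof. intro Hst. rewrite k_hom, grp_hom_inv, Hst. apply grp_mulV. Qed.

Hypothesis k_idem_pure : forall x, k x = grp_one G -> idem S x.

Lemma E_unitary_of_idem_pure : E_unitary S.
Proof.
  intros e s He [f [Hf Hfs]]. apply k_idem_pure.
  now rewrite <- (grp_hom_idem e He), Hfs, k_hom, (grp_hom_idem f Hf), grp_mul1.
Qed.

Lemma ker_eq_sigma_of_idem_pure s t : k s = k t <-> sigma S s t.
Proof.
  split.
  - intro Hst. apply sigma_of_idem_inv_mul, k_idem_pure, grp_hom_inv_mul_one, Hst.
  - intros [e [He Hest]].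
    rewrite <- (grp_mul1 G (k s)), <- (grp_mul1 G (k t)), <- (grp_hom_idem e He), <- !k_hom.
    now rewrite Hest.
Qed.

End GroupValuedHom.

(* The quotient of [U] by the congruence [ker f], realised on the image of [f]. *)
Section ImageInvSemigroup.
Context {U : InvSemigroup} {X : Type} (f : U -> X).
Hypothesis f_mulr : forall u v w, f u = f v -> f (u ** w) = f (v ** w).
Hypothesis f_mull : forall u v w, f u = f v -> f (w ** u) = f (w ** v).
Hypothesis f_inv : forall u v, f u = f v -> f u^-1 = f v^-1.
Hypothesis f_idem_comm : forall u v,
  f (u ** u) = f u -> f (v ** v) = f v -> f (u ** v) = f (v ** u).

Definition image : Type := {x : X | exists u, f u = x}.

Definition image_of (u : U) : image := exist _ (f u) (ex_intro _ u eq_refl).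

Definition image_rep (s : image) : U :=
  proj1_sig (constructive_indefinite_description _ (proj2_sig s)).

Lemma image_of_eq u v : image_of u = image_of v <-> f u = f v.
Proof.
  split; intro H.
  - exact (f_equal (@proj1_sig _ _) H).
  - apply eq_sig_hprop; [intros; apply proof_irrelevance | exact H].
Qed.

Lemma image_of_rep s : image_of (image_rep s) = s.
Proof.
  apply eq_sig_hprop; [intros; apply proof_irrelevance |].
  unfold image_rep. now destruct (constructive_indefinite_description _ _).
Qed.

Lemma image_of_surjective : surjective image_of.
Proof. intro s. exists (image_rep s). apply image_of_rep. Qed.

Definition image_mul (s t : image) : image := image_of (image_rep s ** image_rep t).

Definition image_inv (s : image) : image := image_of (image_rep s)^-1.

Lemma f_image_rep u : f (image_rep (image_of u)) = f u.
Proof. apply image_of_eq, image_of_rep. Qed.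

Lemma image_mul_of u v : image_mul (image_of u) (image_of v) = image_of (u ** v).
Proof.
  apply image_of_eq. rewrite (f_mulr _ _ _ (f_image_rep u)). apply f_mull, f_image_rep.
Qed.

Lemma image_inv_of u : image_inv (image_of u) = image_of u^-1.
Proof. apply image_of_eq, f_inv, f_image_rep. Qed.

Lemma image_assoc s t r : image_mul s (image_mul t r) = image_mul (image_mul s t) r.
Proof.
  destruct (image_of_surjective s) as [u <-], (image_of_surjective t) as [v <-],
    (image_of_surjective r) as [w <-].
  now rewrite !image_mul_of, isg_assoc.
Qed.

Lemma image_reg1 s : image_mul (image_mul s (image_inv s)) s = s.
Proof.
  destruct (image_of_surjective s) as [u <-].
  now rewrite image_inv_of, !image_mul_of, isg_reg1.
Qed.

Lemma image_reg2 s : image_mul (image_mul (image_inv s) s) (image_inv s) = image_inv s.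
Proof.
  destruct (image_of_surjective s) as [u <-].
  now rewrite image_inv_of, !image_mul_of, isg_reg2.
Qed.

Lemma image_idem_comm e e' : image_mul e e = e -> image_mul e' e' = e' ->
  image_mul e e' = image_mul e' e.
Proof.
  destruct (image_of_surjective e) as [u <-], (image_of_surjective e') as [v <-].
  rewrite !image_mul_of, !image_of_eq. apply f_idem_comm.
Qed.

Definition image_isg : InvSemigroup :=
  Build_InvSemigroup image image_mul image_inv image_assoc image_reg1 image_reg2 image_idem_comm.

Lemma image_of_hom : isg_hom U image_isg image_of.
Proof. intros u v. symmetry. apply image_mul_of. Qed.

Lemma idem_image_of u : idem image_isg (image_of u) <-> f (u ** u) = f u.
Proof. unfold idem. simpl. rewrite image_mul_of. apply image_of_eq. Qed.

End ImageInvSemigroup.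

Section GroupExtension.
Context {A U : InvSemigroup} {G : Group} {i : A -> U} {j : U -> G}.
Hypothesis A_slg : semilattice_of_groups A.
Hypothesis ext : group_extension A U G i j.

Let i_hom : isg_hom A U i := proj1 ext.
Let i_inj : injective i := proj1 (proj2 ext).
Let j_hom : isg_grp_hom U G j := proj1 (proj2 (proj2 ext)).
Let j_surj : surjective j := proj1 (proj2 (proj2 (proj2 ext))).
Let ker_j u : (exists a, i a = u) <-> j u = grp_one G := proj2 (proj2 (proj2 (proj2 ext))) u.

Lemma ker_idem_comm n e : j n = grp_one G -> idem U e -> e ** n = n ** e.
Proof.
  intros Hn He.
  destruct (proj2 (ker_j e) (grp_hom_idem j_hom e He)) as [b <-].
  destruct (proj2 (ker_j n) Hn) as [c <-].
  assert (Hb : idem A b) by (apply i_inj; unfold idem; now rewrite i_hom).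
  now rewrite <- !i_hom, (A_slg b c Hb).
Qed.

Lemma ker_mul_inv_comm n : j n = grp_one G -> n ** n^-1 = n^-1 ** n.
Proof.
  intro Hn. destruct (proj2 (ker_j n) Hn) as [c <-].
  rewrite <- (hom_inv _ _ _ i_hom), <- !i_hom.
  now rewrite (semilattice_of_groups_mul_inv_comm A A_slg c).
Qed.

(* [u ρ v] iff [rho_key u = rho_key v]. *)
Definition rho_key (u : U) : G * U := (j u, u ** u^-1).

Lemma rho_key_mulr u v w : rho_key u = rho_key v -> rho_key (u ** w) = rho_key (v ** w).
Proof.
  intros [= Hj Hr]. unfold rho_key. rewrite !j_hom, Hj. f_equal.
  pose proof (grp_hom_inv_mul_one j_hom v u (eq_sym Hj)) as Ha.
  destruct (mul_inv_eq_quotient u v Hr) as [Haa _].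
  rewrite <- (mul_inv_mulK u v Hr).
  set (a := v^-1 ** u) in *.
  rewrite !inv_mul.
  reassoc (v ** (a ** (w ** w^-1)) ** a^-1 ** v^-1).
  rewrite <- (ker_idem_comm a _ Ha (idem_mul_inv w)).
  reassoc (v ** (w ** w^-1) ** (a ** a^-1) ** v^-1).
  rewrite Haa. reassoc (v ** (w ** w^-1 ** (v^-1 ** v)) ** v^-1).
  rewrite (isg_idem_comm _ _ _ (idem_mul_inv w) (idem_inv_mul v)).
  reassoc ((v ** v^-1 ** v) ** (w ** w^-1) ** v^-1). now rewrite isg_reg1, !isg_assoc.
Qed.

Lemma rho_key_mull u v w : rho_key u = rho_key v -> rho_key (w ** u) = rho_key (w ** v).
Proof.
  intros [= Hj Hr]. unfold rho_key. rewrite !j_hom, Hj, !inv_mul. f_equal.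
  reassoc (w ** (u ** u^-1) ** w^-1). rewrite Hr. now rewrite !isg_assoc.
Qed.

Lemma rho_key_inv u v : rho_key u = rho_key v -> rho_key u^-1 = rho_key v^-1.
Proof.
  intros [= Hj Hr]. unfold rho_key. rewrite !(grp_hom_inv j_hom), Hj, !invK. f_equal.
  pose proof (grp_hom_inv_mul_one j_hom v u (eq_sym Hj)) as Ha.
  destruct (mul_inv_eq_quotient u v Hr) as [Haa Haa'].
  now rewrite <- Haa', <- (ker_mul_inv_comm _ Ha).
Qed.

Lemma idem_rho_key u : rho_key (u ** u) = rho_key u <-> j u = grp_one G.
Proof.
  unfold rho_key. split.
  - intros [= Hj _]. apply grp_idem_one. now rewrite <- j_hom.
  - intro Hu. rewrite j_hom, Hu, grp_mul1, inv_mul. f_equal.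
    reassoc (u ** (u ** u^-1) ** u^-1). rewrite (ker_mul_inv_comm u Hu) at 1.
    reassoc ((u ** u^-1 ** u) ** u^-1). now rewrite isg_reg1.
Qed.

Lemma rho_key_idem_comm u v : rho_key (u ** u) = rho_key u -> rho_key (v ** v) = rho_key v ->
  rho_key (u ** v) = rho_key (v ** u).
Proof.
  rewrite !idem_rho_key. intros Hu Hv. unfold rho_key.
  rewrite !j_hom, Hu, Hv, !inv_mul. f_equal.
  reassoc (u ** (v ** v^-1) ** u^-1). rewrite <- (ker_idem_comm u _ Hu (idem_mul_inv v)).
  reassoc (v ** v^-1 ** (u ** u^-1)).
  rewrite (isg_idem_comm _ _ _ (idem_mul_inv v) (idem_mul_inv u)).
  reassoc (u ** u^-1 ** v ** v^-1). rewrite (ker_idem_comm v _ Hv (idem_mul_inv u)).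
  now rewrite !isg_assoc.
Qed.

Definition quotient_isg : InvSemigroup :=
  image_isg rho_key rho_key_mulr rho_key_mull rho_key_inv rho_key_idem_comm.

Definition quotient_pi : U -> quotient_isg := image_of rho_key.

Definition quotient_kappa (s : quotient_isg) : G := fst (proj1_sig s).

Lemma quotient_pi_hom : isg_hom U quotient_isg quotient_pi.
Proof. apply image_of_hom. Qed.

Lemma quotient_pi_surjective : surjective quotient_pi.
Proof. apply image_of_surjective. Qed.

Lemma quotient_pi_idem_separating : idem_separating U quotient_isg quotient_pi.
Proof.
  intros e f He Hf [= _ Hef]%image_of_eq.
  now rewrite (inv_idem e He), (inv_idem f Hf), He, Hf in Hef.
Qed.

Lemma quotient_pi_extension : isg_extension A U quotient_isg i quotient_pi.
Proof.
  refine (conj i_hom (conj i_inj (conj quotient_pi_hom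
    (conj quotient_pi_surjective (conj quotient_pi_idem_separating _))))).
  intro u. rewrite ker_j, <- idem_rho_key. apply iff_sym, idem_image_of.
Qed.

Lemma quotient_kappa_hom : isg_grp_hom quotient_isg G quotient_kappa.
Proof.
  intros s t.
  destruct (quotient_pi_surjective s) as [u <-], (quotient_pi_surjective t) as [v <-].
  rewrite <- quotient_pi_hom. apply j_hom.
Qed.

Lemma quotient_kappa_surjective : surjective quotient_kappa.
Proof.
  intro g. destruct (j_surj g) as [u <-].
  now exists (quotient_pi u).
Qed.

Lemma group_extension_factors : exists (S : InvSemigroup) (p : U -> S) (k : S -> G),
  surjective p /\ isg_grp_hom S G k /\ surjective k /\
  isg_extension A U S i p /\ (forall u, j u = k (p u)).
Proof.
  exists quotient_isg, quotient_pi, quotient_kappa.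
  refine (conj quotient_pi_surjective (conj quotient_kappa_hom
    (conj quotient_kappa_surjective (conj quotient_pi_extension _)))).
  reflexivity.
Qed.

Lemma factor_idem_pure (S : InvSemigroup) (p : U -> S) (k : S -> G) :
  isg_extension A U S i p -> (forall u, j u = k (p u)) ->
  forall x, k x = grp_one G -> idem S x.
Proof.
  intros (_ & _ & _ & p_surj & _ & ker_p) jk x Hx.
  destruct (p_surj x) as [u <-].
  apply ker_p, ker_j. now rewrite jk.
Qed.

End GroupExtension.

Theorem proposition4p5 (A U : InvSemigroup) (G : Group)
  (i : A -> U) (j : U -> G) :
  semilattice_of_groups A ->
  group_extension A U G i j ->
  (exists (S : InvSemigroup) (p : U -> S) (k : S -> G),
      surjective p /\ isg_grp_hom S G k /\ surjective k /\
      isg_extension A U S i p /\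
      (forall u, j u = k (p u)))
  /\
  (forall (S : InvSemigroup) (p : U -> S) (k : S -> G),
      isg_grp_hom S G k ->
      isg_extension A U S i p ->
      (forall u, j u = k (p u)) ->
      E_unitary S /\ (forall s t : S, k s = k t <-> sigma S s t)).
Proof.
  intros A_slg ext. split.
  - exact (group_extension_factors A_slg ext).
  - intros S p k k_hom p_ext jk.
    pose proof (factor_idem_pure ext S p k p_ext jk) as k_idem_pure.
    split.
    + exact (E_unitary_of_idem_pure k_hom k_idem_pure).
    + exact (ker_eq_sigma_of_idem_pure k_hom k_idem_pure).
Qed.
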